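(* Let $q$ be a meromorphic quadratic differential on $\mathbb{P}^1$ with exactly four poles, all double poles, each of residue $1$, and holomorphic elsewhere. Then the zero partition of $q$ is either $4=2+2$ or $4=1+1+1+1$, i.e. $q$ has two double zeroes or four simple zeroes.
   Context: A double pole $p$ of $q$ has residue $a>0$ if, in a local coordinate $z$ with $z(p)=0$, $q=\bigl(-\frac{a^2}{4\pi^2 z^2}+O(z^{-1})\bigr)dz^2$. Such a $q$ has four zeroes counted with multiplicity. *)

From HB Require Import structures.
From mathcomp Require Import all_boot all_order all_algebra.
From mathcomp Require Import complex.
From mathcomp Require Import reals trigo.
Set Implicit Arguments. Unset Strict Implicit. Unset Printing Implicit Defensive.
Import Order.TTheory GRing.Theory Num.Theory.
Local Open Scope ring_scope.

(* A meromorphic quadratic differential on P^1 = C ∪ {∞} is q = f(z) dz^2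
   with f = n/d a nonzero rational function (n d : {poly C}, n, d <> 0).
   Points of P^1 are [option C]: [Some c] is the finite point z = c and
   [None] is the point at infinity (local coordinate w = 1/z, where
   q = f(1/w) w^-4 dw^2). *)

Section QD.
Variable C : fieldType.

Definition qd_ord (n d : {poly C}) (x : option C) : int :=
  match x with
  | Some c => (mup c n)%:Z - (mup c d)%:Z
  | None => (size d)%:Z - (size n)%:Z - 4
  end.

(* leading Laurent coefficient of q at x in the standard local coordinate
   (z - c at a finite point c, w = 1/z at infinity): if q has order k at x
   then q = (lcoef * t^k + O(t^(k+1))) dt^2. *)
Definition qd_lcoef (n d : {poly C}) (x : option C) : C :=
  match x with
  | Some c => (n %/ ('X - c%:P) ^+ (mup c n)).[c]
              / (d %/ ('X - c%:P) ^+ (mup c d)).[c]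
  | None => lead_coef n / lead_coef d
  end.

Definition qd_double_pole_res (pi_ : C) (n d : {poly C}) (x : option C) (a : C)
  : Prop :=
  qd_ord n d x = -2 /\ qd_lcoef n d x = - (a ^+ 2) / (4%:R * pi_ ^+ 2).

End QD.

From HB Require Import structures.
From mathcomp Require Import all_boot all_order all_algebra.
From mathcomp Require Import complex.
From mathcomp Require Import reals trigo.
From mathcomp Require Import ring zify.
Import Order.TTheory GRing.Theory Num.Theory.
Local Open Scope ring_scope.
Set Implicit Arguments. Unset Strict Implicit. Unset Printing Implicit Defensive.

(* Clear the finite poles: with P the product of the X - c over the finite
   poles c, q = (Q / P^2) dz^2 for a polynomial Q of degree at most 4, and the
   residue condition reads Q(c) = k P'(c)^2 at a finite pole (k = -1/(4 pi^2)),
   and "Q has degree 4 and leading coefficient k" at a pole at infinity.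
   Split the four poles into two pairs in any of the three possible ways,
   P = A B, and let N = A'B - AB'.  At the roots of P, N^2 = P'^2, so Q and k N^2
   agree there and Q = k N^2 + t P for a constant t.  If t = 0 for some
   splitting, q = k (N / P)^2 dz^2 has two double zeros.  Otherwise a
   double zero z of q forces (y_a - y_b)^2 = (y_c - y_d)^2 for every splitting
   {a, b | c, d}, where y_p = 1/(z - p) (y_p = 0 if p is at infinity, y_p = p if
   z is at infinity); these three identities are incompatible for four distinct
   numbers, so the four zeros are simple. *)

(* [hornerE] also normalizes products into a form that [ring] cannot read. *)
Definition horner_evalE :=
  (hornerD, hornerN, hornerX, hornerC, hornerCM, hornerM, horner_exp, hornerMn).

Section Polynomials.
Variable C : fieldType.
Implicit Types (A B Q R : {poly C}) (k t z : C).

Definition simple_roots (p : {poly C}) := forall z, root p z -> ~~ root p^`() z.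

Definition wronskian A B := A^`() * B - A * B^`().

(* For A = (X - p)(X - q) this is the discriminant (p - q)^2, whatever z is. *)
Definition disc_at A z := (A^`()).[z] ^+ 2 - 2%:R * A.[z] * (A^`()^`()).[z].

Lemma deriv_wronskian A B :
  (wronskian A B)^`() = A^`()^`() * B - A * B^`()^`().
Proof. rewrite /wronskian !derivE; ring. Qed.

Lemma wronskian_sqr_root A B z : root (A * B) z ->
  (wronskian A B).[z] ^+ 2 = ((A * B)^`()).[z] ^+ 2.
Proof.
rewrite /root /wronskian derivM !horner_evalE => /eqP ABz.
transitivity (((A^`()).[z] * B.[z] + A.[z] * (B^`()).[z]) ^+ 2
  - 4%:R * (A.[z] * B.[z]) * ((A^`()).[z] * (B^`()).[z])); first ring.
by rewrite ABz mulr0 mul0r subr0.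
Qed.

Lemma pencil_prod_XsubC (rs : seq C) Q R : uniq rs ->
  {in rs, forall z, Q.[z] = R.[z]} ->
  (size (Q - R)%R <= size (\prod_(z <- rs) ('X - z%:P))%R)%N ->
  exists t, Q = R + t%:P * \prod_(z <- rs) ('X - z%:P).
Proof.
set P := \prod_(z <- rs) _ => urs QR size_QR.
have /dvdpP [T QRE] : P %| Q - R.
  apply: uniq_roots_dvdp; last by rewrite uniq_rootsE.
  by apply/allP => z zrs; rewrite /root !horner_evalE QR // subrr.
have P_gt0 : (0 < size P)%N by rewrite size_prod_XsubC.
have size_T : (size T <= 1)%N.
  have [->|T0] := eqVneq T 0; first by rewrite size_poly0.
  have T_gt0 : (0 < size T)%N by rewrite size_poly_gt0.
  move: size_QR; rewrite QRE size_mul -?size_poly_gt0 // -subn1.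
  by move: T_gt0 P_gt0 (size T) (size P); lia.
by exists T`_0; rewrite -size1_polyC // -QRE; ring.
Qed.

Lemma pencil_double_root A B Q k t z : k != 0 -> t != 0 -> (A * B).[z] != 0 ->
  Q = k%:P * wronskian A B ^+ 2 + t%:P * (A * B) ->
  root Q z -> root Q^`() z ->
  B.[z] ^+ 2 * disc_at A z = A.[z] ^+ 2 * disc_at B z.
Proof.
move=> k0 t0; rewrite /disc_at hornerM => ABz ->.
rewrite /root expr2 !derivE -expr2 !horner_evalE => /eqP Qz /eqP Q'z.
move: Qz Q'z ABz.
set a0 := A.[z]; set a1 := (A^`()).[z]; set a2 := (A^`()^`()).[z].
set b0 := B.[z]; set b1 := (B^`()).[z]; set b2 := (B^`()^`()).[z].
set w := a1 * b0 - a0 * b1 => Qz Q'z ABz.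
have w0 : w != 0.
  apply: contra_neq t0 => w0; apply: (mulIf ABz).
  by rewrite mul0r -[RHS]Qz w0; ring.
(* eliminate [t] between [Q.[z] = 0] and [Q^`().[z] = 0] *)
have := congr2 (fun u v => u * (a0 * b0) - v * (a1 * b0 + a0 * b1)) Q'z Qz.
rewrite /= !mul0r subrr => elim_t.
have : k * w * (2%:R * (a2 * b0 - a0 * b2) * (a0 * b0) - w * (a1 * b0 + a0 * b1)) = 0.
  by rewrite -elim_t /w; ring.
move/eqP; rewrite !mulf_eq0 (negbTE k0) (negbTE w0) /= subr_eq0 => /eqP e.
apply/eqP; rewrite -subr_eq0; apply/eqP.
transitivity (w * (a1 * b0 + a0 * b1) - 2%:R * (a2 * b0 - a0 * b2) * (a0 * b0)).
  by rewrite /w; ring.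
by rewrite -e subrr.
Qed.

Lemma wronskian_double_root A B z :
  root (wronskian A B) z -> root (wronskian A B)^`() z ->
  (A^`()).[z] * B.[z] = A.[z] * (B^`()).[z] /\
  B.[z] ^+ 2 * disc_at A z = A.[z] ^+ 2 * disc_at B z.
Proof.
rewrite deriv_wronskian /root /wronskian /disc_at !horner_evalE.
move=> /eqP /subr0_eq W0 /eqP /subr0_eq W'0; split=> //.
transitivity (((A^`()).[z] * B.[z]) ^+ 2
  - 2%:R * (A.[z] * B.[z]) * ((A^`()^`()).[z] * B.[z])); first ring.
rewrite W0 W'0; ring.
Qed.

Lemma size_sub_coef_eq (Q R : {poly C}) n : (size Q <= n.+1)%N -> (size R <= n.+1)%N ->
  Q`_n = R`_n -> (size (Q - R)%R <= n)%N.
Proof.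
move=> sQ sR QRn; apply/leq_sizeP => j; rewrite leq_eqVlt => /orP[/eqP<-|nj].
  by rewrite coefB QRn subrr.
by rewrite coefB !nth_default ?subrr // (leq_trans _ nj).
Qed.

Lemma coef_sqr_Poly3 (w0 w1 w2 : C) :
  (Poly [:: w0; w1; w2] ^+ 2)`_4 = w2 ^+ 2 /\ (Poly [:: w0; w1; w2] ^+ 2)`_3 = 2%:R * w1 * w2.
Proof.
rewrite expr2 !coefM !big_ord_recl !big_ord0 /= !coef_cons !coefC /=.
by split; ring.
Qed.

Lemma size_sqr_Poly3 (w0 w1 w2 : C) : (size (Poly [:: w0; w1; w2] ^+ 2)%R <= 5)%N.
Proof.
apply: leq_trans (size_poly_exp_leq _ _) _.
by have := size_Poly [:: w0; w1; w2]; move: (size _) => n /=; lia.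
Qed.

Lemma mup_ge2_root (Q : {poly C}) z : Q != 0 -> (2 <= mup z Q)%N ->
  root Q z /\ root Q^`() z.
Proof.
move=> Q0; rewrite mup_geq // => /dvdpP [R ->].
by rewrite /root expr2 !derivE !horner_evalE subrr !(mulr0, mul0r, addr0) eqxx.
Qed.

End Polynomials.

Section Pairings.
Variable C : fieldType.
Hypothesis two_neq0 : 2%:R != 0 :> C.

Lemma sum_sqr_diff_eq (y1 y2 y3 y4 : C) :
  y1 + y2 = y3 + y4 -> (y1 - y2) ^+ 2 = (y3 - y4) ^+ 2 -> y1 = y3 \/ y1 = y4.
Proof.
move=> sum_eq sqr_eq.
have : 4%:R * ((y1 - y3) * (y1 - y4)) = 0.
  transitivity ((y1 - y2) ^+ 2 - (y3 - y4) ^+ 2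
                + (y3 + y4 - (y1 + y2)) * (y3 + y4 - 3%:R * y1 + y2)); first ring.
  by rewrite sqr_eq sum_eq !subrr mul0r addr0.
move/eqP; rewrite (natrM C 2 2) !mulf_eq0 (negbTE two_neq0) !subr_eq0 /=.
by case/orP => /eqP; [left | right].
Qed.

Lemma sqr_diff_pairings (y1 y2 y3 y4 : C) : uniq [:: y1; y2; y3; y4] ->
  (y1 - y2) ^+ 2 = (y3 - y4) ^+ 2 -> (y1 - y3) ^+ 2 = (y2 - y4) ^+ 2 ->
  (y1 - y4) ^+ 2 = (y2 - y3) ^+ 2 -> False.
Proof.
rewrite /= !inE !negb_or => /andP[/and3P[y12 y13 y14] _] e12 e13 e14.
set al := y1 - y2 - y3 + y4; set be := y1 - y2 + y3 - y4; set ga := y1 - y3 + y2 - y4.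
have ab : al * be = 0.
  by rewrite -(subrr ((y3 - y4) ^+ 2)) -{1}e12 /al /be; ring.
have ag : al * ga = 0.
  by rewrite -(subrr ((y2 - y4) ^+ 2)) -{1}e13 /al /ga; ring.
have bg : be * ga = 0.
  by rewrite -(subrr ((y2 - y3) ^+ 2)) -{1}e14 /be /ga; ring.
have sum_neq0 (u v s : C) : u + v = 2%:R * (y1 - s) -> y1 != s -> u + v != 0.
  by move=> -> y1s; rewrite mulf_neq0 // subr_eq0.
have /sum_neq0 ab_neq0 : al + be = 2%:R * (y1 - y2) by rewrite /al /be; ring.
have /sum_neq0 ag_neq0 : al + ga = 2%:R * (y1 - y3) by rewrite /al /ga; ring.
have /sum_neq0 bg_neq0 : be + ga = 2%:R * (y1 - y4) by rewrite /be /ga; ring.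
have [al0|al_neq0] := eqVneq al 0.
  move: bg ab_neq0 ag_neq0; rewrite al0 !add0r => /eqP.
  by rewrite mulf_eq0 => /orP[]/eqP-> => [/(_ y12)|_ /(_ y13)]; rewrite eqxx.
move: ab ag => /eqP; rewrite mulf_eq0 (negbTE al_neq0) => /eqP be0 /eqP.
rewrite mulf_eq0 (negbTE al_neq0) => /eqP ga0.
by move: (bg_neq0 y14); rewrite be0 ga0 addr0 eqxx.
Qed.

(* [None] stands for the point at infinity: its factor is dropped and
   1 / (z - infinity) is 0. *)
Definition oXsubC (u : option C) : {poly C} := if u is Some c then 'X - c%:P else 1.

Definition oinv_sub (z : C) (u : option C) : C := if u is Some c then (z - c)^-1 else 0.

Definition oXsubC2 u v := oXsubC u * oXsubC v.

Lemma horner_oXsubC u z : (oXsubC u).[z] = if u is Some c then z - c else 1.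
Proof. by case: u => [c|]; rewrite /= !horner_evalE. Qed.

Lemma oinv_sub_inj z : {in [pred u | (oXsubC u).[z] != 0] &, injective (oinv_sub z)}.
Proof.
move=> [c|] [d|]; rewrite !inE !horner_oXsubC ?oner_eq0 //= => zc zd.
- by move/invr_inj/eqP; rewrite -subr_eq0 opprB addrC subrKA subr_eq0 => /eqP->.
- by move/eqP; rewrite invr_eq0 (negbTE zc).
- by move/esym/eqP; rewrite invr_eq0 (negbTE zd).
Qed.

Lemma disc_at_oXsubC2 u v z : (oXsubC2 u v).[z] != 0 ->
  disc_at (oXsubC2 u v) z = (oXsubC2 u v).[z] ^+ 2 * (oinv_sub z u - oinv_sub z v) ^+ 2.
Proof.
rewrite /disc_at /oXsubC2 hornerM !horner_oXsubC.
case: u => [c|]; case: v => [d|] /=; rewrite ?mulr1 ?mul1r => z_neq0;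
  rewrite !derivE !horner_evalE; field;
  by move: z_neq0; rewrite ?mulf_eq0 ?negb_or 1?andbC.
Qed.

Lemma deriv_oXsubC2 u v z : (oXsubC2 u v).[z] != 0 ->
  ((oXsubC2 u v)^`()).[z] = (oXsubC2 u v).[z] * (oinv_sub z u + oinv_sub z v).
Proof.
rewrite /oXsubC2 hornerM !horner_oXsubC.
case: u => [c|]; case: v => [d|] /=; rewrite ?mulr1 ?mul1r => z_neq0;
  rewrite !derivE !horner_evalE; field;
  by move: z_neq0; rewrite ?mulf_eq0 ?negb_or 1?andbC.
Qed.

Lemma uniq_oinv_sub (u v w x : option C) z : uniq [:: u; v; w; x] ->
  (oXsubC2 u v * oXsubC2 w x).[z] != 0 ->
  uniq [:: oinv_sub z u; oinv_sub z v; oinv_sub z w; oinv_sub z x].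
Proof.
rewrite /oXsubC2 !hornerM !mulf_eq0 !negb_or => uniq_s /andP[/andP[zu zv] /andP[zw zx]].
change (uniq (map (oinv_sub z) [:: u; v; w; x])); rewrite map_inj_in_uniq //.
by apply: sub_in2 (@oinv_sub_inj z) => y; rewrite !inE => /or4P[]/eqP->.
Qed.

Lemma pencil_double_root_pairs u v w x Q k t z : k != 0 -> t != 0 ->
  (oXsubC2 u v * oXsubC2 w x).[z] != 0 ->
  Q = k%:P * wronskian (oXsubC2 u v) (oXsubC2 w x) ^+ 2
      + t%:P * (oXsubC2 u v * oXsubC2 w x) ->
  root Q z -> root Q^`() z ->
  (oinv_sub z u - oinv_sub z v) ^+ 2 = (oinv_sub z w - oinv_sub z x) ^+ 2.
Proof.
move=> k0 t0 ABz eQ Qz Q'z; have := pencil_double_root k0 t0 ABz eQ Qz Q'z.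
move: ABz; rewrite hornerM mulf_eq0 negb_or => /andP[Az Bz].
rewrite !disc_at_oXsubC2 // mulrCA.
by move=> /(mulfI (expf_neq0 2 Az)) /(mulfI (expf_neq0 2 Bz)).
Qed.

Lemma wronskian_double_root_pairs u v w x z :
  (oXsubC2 u v * oXsubC2 w x).[z] != 0 ->
  root (wronskian (oXsubC2 u v) (oXsubC2 w x)) z ->
  root (wronskian (oXsubC2 u v) (oXsubC2 w x))^`() z ->
  oinv_sub z u = oinv_sub z w \/ oinv_sub z u = oinv_sub z x.
Proof.
move=> ABz Wz W'z; have [sum_eq disc_eq] := wronskian_double_root Wz W'z.
move: ABz; rewrite hornerM mulf_eq0 negb_or => /andP[Az Bz].
apply: sum_sqr_diff_eq.
  move: sum_eq; rewrite !deriv_oXsubC2 // mulrAC mulrA.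
  exact/mulfI/mulf_neq0.
move: disc_eq; rewrite !disc_at_oXsubC2 // mulrCA.
by move=> /(mulfI (expf_neq0 2 Az)) /(mulfI (expf_neq0 2 Bz)).
Qed.

End Pairings.

Section ExplicitPairings.
Variable C : fieldType.

Lemma wronskian_oXsubC2_Some (p q r s : C) :
  wronskian (oXsubC2 (Some p) (Some q)) (oXsubC2 (Some r) (Some s)) =
  Poly [:: p * q * (r + s) - (p + q) * (r * s); 2%:R * (r * s - p * q); p + q - r - s].
Proof. rewrite /wronskian /oXsubC2 /= !cons_poly_def !derivE; ring. Qed.

Lemma wronskian_oXsubC2_None (p q r : C) :
  wronskian (oXsubC2 (Some p) (Some q)) (oXsubC2 (Some r) None) =
  Poly [:: r * (p + q) - p * q; - (2%:R * r); 1].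
Proof. rewrite /wronskian /oXsubC2 /= !cons_poly_def !derivE; ring. Qed.

Lemma prod_oXsubC2_Some (p q r s : C) :
  oXsubC2 (Some p) (Some q) * oXsubC2 (Some r) (Some s) =
  Poly [:: p * q * r * s; - (p * q * r + p * q * s + p * r * s + q * r * s);
           p * q + p * r + p * s + q * r + q * s + r * s; - (p + q + r + s); 1].
Proof. rewrite /oXsubC2 /= !cons_poly_def; ring. Qed.

(* A double zero of q at infinity: the analogue of [pencil_double_root_pairs]
   where 1 / (z - p) is replaced by p. *)
Lemma pencil_size_le3 (p q r s k t : C) Q : k != 0 -> t != 0 ->
  Q = k%:P * wronskian (oXsubC2 (Some p) (Some q)) (oXsubC2 (Some r) (Some s)) ^+ 2
      + t%:P * (oXsubC2 (Some p) (Some q) * oXsubC2 (Some r) (Some s)) ->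
  (size Q <= 3)%N -> (p - q) ^+ 2 = (r - s) ^+ 2.
Proof.
rewrite wronskian_oXsubC2_Some prod_oXsubC2_Some => k0 t0 eQ sQ.
have [Q4 Q3] : Q`_4 = k * (p + q - r - s) ^+ 2 + t /\
    Q`_3 = k * (2%:R * (2%:R * (r * s - p * q)) * (p + q - r - s)) + t * - (p + q + r + s).
  rewrite eQ !coefD !coefCM !coef_Poly /= mulr1.
  by rewrite (coef_sqr_Poly3 _ _ _).1 (coef_sqr_Poly3 _ _ _).2.
set w1 := 2%:R * (r * s - p * q) in Q3; set w2 := p + q - r - s in Q4 Q3.
have [Q4_0 Q3_0] : Q`_4 = 0 /\ Q`_3 = 0 by split; apply: nth_default; apply: leq_trans sQ _.
have w2_neq0 : w2 != 0.
  apply: contra_neq t0 => w2_0.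
  by move: Q4; rewrite Q4_0 w2_0 expr2 mul0r mulr0 add0r.
have : k * (w2 * w2) * (2%:R * w1 + w2 * (p + q + r + s)) = 0.
  transitivity (w2 * Q`_3 + (p + q + r + s) * w2 * Q`_4); first by rewrite Q3 Q4; ring.
  by rewrite Q4_0 Q3_0; ring.
move/eqP; rewrite !mulf_eq0 (negbTE k0) (negbTE w2_neq0) /= => /eqP key.
apply/eqP; rewrite -subr_eq0; apply/eqP.
by rewrite -key /w1 /w2; ring.
Qed.
Lemma uniq_poles (a b c : C) x :
  uniq [:: a, b, c & seq_of_opt x] -> uniq [:: Some a; Some b; Some c; x].
Proof. by case: x => [d|] /=; rewrite !inE !(inj_eq Some_inj) //= !orbF. Qed.

Lemma prod_XsubC_pairing (p q r : C) x :
  \prod_(z <- [:: p, q, r & seq_of_opt x]) ('X - z%:P) =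
  oXsubC2 (Some p) (Some q) * oXsubC2 (Some r) x.
Proof. by case: x => [d|]; rewrite /oXsubC2 /= !big_cons big_nil /=; ring. Qed.

Lemma size_pencil_remainder (p q r k : C) (x : option C) (Q : {poly C}) :
  (size Q <= 5)%N -> (x = None -> Q`_4 = k) ->
  (size (Q - k%:P * wronskian (oXsubC2 (Some p) (Some q)) (oXsubC2 (Some r) x) ^+ 2)%R
    <= (size (seq_of_opt x)).+4)%N.
Proof.
have size_kW2 (w0 w1 w2 : C) : (size (k%:P * Poly [:: w0; w1; w2] ^+ 2)%R <= 5)%N.
  by rewrite mul_polyC; apply: leq_trans (size_scale_leq _ _) (size_sqr_Poly3 _ _ _).
case: x => [d|] sQ Q4; rewrite ?wronskian_oXsubC2_Some ?wronskian_oXsubC2_None /=.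
  apply: leq_trans (size_polyD _ _) _.
  by rewrite size_polyN geq_max sQ size_kW2.
apply: size_sub_coef_eq sQ (size_kW2 _ _ _) _.
by rewrite Q4 // coefCM (coef_sqr_Poly3 _ _ _).1 expr1n mulr1.
Qed.

End ExplicitPairings.

(* q = (Q / P^2) dz^2 has poles at a, b, c and at x (x = None: at infinity). *)
Section QuarticPencil.
Variables (C : fieldType) (a b c k : C) (x : option C) (Q : {poly C}).
Hypothesis two_neq0 : 2%:R != 0 :> C.

Local Notation F := [:: a, b, c & seq_of_opt x].
Local Notation P := (\prod_(z <- F) ('X - z%:P)).
Local Notation W p q r := (wronskian (oXsubC2 (Some p) (Some q)) (oXsubC2 (Some r) x)).
Local Notation AB p q r := (oXsubC2 (Some p) (Some q) * oXsubC2 (Some r) x).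

Hypotheses (uniq_F : uniq F) (k_neq0 : k != 0).
Hypotheses (size_Q : (size Q <= 5)%N) (coef4_Q : x = None -> Q`_4 = k).
Hypothesis Q_poles : {in F, forall z, Q.[z] = k * (P^`()).[z] ^+ 2}.
Hypothesis Q_poles_neq0 : {in F, forall z, ~~ root Q z}.

Let perm_acb : perm_eq [:: a; c; b] [:: a; b; c].
Proof. by apply/permP => pr /=; lia. Qed.

Let perm_bca : perm_eq [:: b; c; a] [:: a; b; c].
Proof. by apply/permP => pr /=; lia. Qed.

Lemma perm_poles p q r : perm_eq [:: p; q; r] [:: a; b; c] ->
  perm_eq [:: p, q, r & seq_of_opt x] F.
Proof. by rewrite -(perm_cat2r (seq_of_opt x)). Qed.

Lemma pairing_pencil p q r : perm_eq [:: p; q; r] [:: a; b; c] ->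
  exists t, Q = k%:P * W p q r ^+ 2 + t%:P * AB p q r.
Proof.
move=> /perm_poles pqr; rewrite -prod_XsubC_pairing.
apply: pencil_prod_XsubC; first by rewrite (perm_uniq pqr).
  move=> z; rewrite (perm_mem pqr) => zF.
  rewrite hornerCM horner_exp wronskian_sqr_root.
    by rewrite -prod_XsubC_pairing (perm_big _ pqr) Q_poles.
  by rewrite -prod_XsubC_pairing root_prod_XsubC (perm_mem pqr).
by rewrite size_prod_XsubC; apply: size_pencil_remainder.
Qed.

Lemma deriv_poles_neq0 z : z \in F -> (P^`()).[z] != 0.
Proof.
move=> zF; apply: contra (Q_poles_neq0 zF) => /eqP P'z.
by rewrite /root Q_poles // P'z expr2 !mulr0.
Qed.

Lemma root_pairing p q r z : perm_eq [:: p; q; r] [:: a; b; c] ->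
  root (AB p q r) z = (z \in F).
Proof.
by move=> pqr; rewrite -prod_XsubC_pairing root_prod_XsubC (perm_mem (perm_poles pqr)).
Qed.

Lemma deriv_pairing p q r : perm_eq [:: p; q; r] [:: a; b; c] ->
  (AB p q r)^`() = P^`().
Proof. by move=> pqr; rewrite -prod_XsubC_pairing (perm_big _ (perm_poles pqr)). Qed.

Lemma uniq_pairing p q r : perm_eq [:: p; q; r] [:: a; b; c] ->
  uniq [:: Some p; Some q; Some r; x].
Proof. by move=> pqr; apply: uniq_poles; rewrite (perm_uniq (perm_poles pqr)). Qed.

Lemma wronskian_pairing_poles_neq0 p q r z : perm_eq [:: p; q; r] [:: a; b; c] ->
  root (AB p q r) z -> ~~ root (W p q r) z.
Proof.
move=> pqr ABz; have zF : z \in F by rewrite -(root_pairing _ pqr).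
apply: contra (deriv_poles_neq0 zF) => /eqP Wz.
by rewrite -sqrf_eq0 -(deriv_pairing pqr) -wronskian_sqr_root // Wz expr2 mulr0.
Qed.

Lemma size_wronskian_pairing p q r : perm_eq [:: p; q; r] [:: a; b; c] ->
  (2 <= size (W p q r))%N.
Proof.
move=> pqr; rewrite ltnNge; apply/negP => /size1_polyC W_const.
have pF : p \in F by rewrite -(perm_mem (perm_poles pqr)) mem_head.
have := deriv_poles_neq0 pF; rewrite -(deriv_pairing pqr).
have Ap : (oXsubC2 (Some p) (Some q)).[p] = 0.
  by rewrite hornerM horner_oXsubC subrr mul0r.
have A'' : (oXsubC2 (Some p) (Some q))^`()^`() = 2%:R%:P.
  by rewrite /oXsubC2 /oXsubC !derivE; ring.
move: W_const Ap A''.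
move: (oXsubC2 (Some p) (Some q)) (oXsubC2 (Some r) x) => A B W_const Ap A''.
have : ((wronskian A B)^`()).[p] = 0 by rewrite W_const derivC hornerC.
rewrite deriv_wronskian !horner_evalE Ap A'' hornerC mul0r subr0 => /eqP.
rewrite mulf_eq0 (negbTE two_neq0) /= => /eqP Bp.
by rewrite derivM !horner_evalE Ap Bp !mulr0 mul0r addr0 eqxx.
Qed.

Lemma wronskian_pairing_simple p q r : perm_eq [:: p; q; r] [:: a; b; c] ->
  simple_roots (W p q r).
Proof.
move=> pqr z Wz; apply/negP => W'z.
have [ABz|ABz] := boolP (root (AB p q r) z).
  by move: Wz; rewrite (negbTE (wronskian_pairing_poles_neq0 pqr ABz)).
have := uniq_oinv_sub (uniq_pairing pqr) ABz.
by case: (wronskian_double_root_pairs two_neq0 ABz Wz W'z) => ->; rewrite /= !inE eqxx ?orbT.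
Qed.

Lemma pencils_simple_roots t1 t2 t3 : t1 != 0 -> t2 != 0 -> t3 != 0 ->
  Q = k%:P * W a b c ^+ 2 + t1%:P * AB a b c ->
  Q = k%:P * W a c b ^+ 2 + t2%:P * AB a c b ->
  Q = k%:P * W b c a ^+ 2 + t3%:P * AB b c a ->
  simple_roots Q.
Proof.
move=> t1_neq0 t2_neq0 t3_neq0 e1 e2 e3 z Qz; apply/negP => Q'z.
have zF : z \notin F by apply: contraL Qz; apply: Q_poles_neq0.
have ABz p q r : perm_eq [:: p; q; r] [:: a; b; c] -> (AB p q r).[z] != 0.
  by move=> pqr; rewrite -rootE (root_pairing _ pqr).
have := uniq_oinv_sub (uniq_pairing (perm_refl _)) (ABz _ _ _ (perm_refl _)).
move/(sqr_diff_pairings two_neq0); apply.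
- exact: pencil_double_root_pairs k_neq0 t1_neq0 (ABz _ _ _ (perm_refl _)) e1 Qz Q'z.
- exact: pencil_double_root_pairs k_neq0 t2_neq0 (ABz _ _ _ perm_acb) e2 Qz Q'z.
- exact/esym/(pencil_double_root_pairs k_neq0 t3_neq0 (ABz _ _ _ perm_bca) e3 Qz Q'z).
Qed.

Lemma pencils_size t1 t2 t3 : t1 != 0 -> t2 != 0 -> t3 != 0 ->
  Q = k%:P * W a b c ^+ 2 + t1%:P * AB a b c ->
  Q = k%:P * W a c b ^+ 2 + t2%:P * AB a c b ->
  Q = k%:P * W b c a ^+ 2 + t3%:P * AB b c a ->
  (4 <= size Q)%N.
Proof.
move=> t1_neq0 t2_neq0 t3_neq0 e1 e2 e3; rewrite ltnNge; apply/negP => size_Q3.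
case E : x e1 e2 e3 => [d|] e1 e2 e3; last first.
  by move: k_neq0; rewrite -(coef4_Q E) nth_default ?eqxx // (leq_trans size_Q3).
have := uniq_F; rewrite E /= => uniq_abcd.
apply: (sqr_diff_pairings two_neq0 uniq_abcd).
- exact: pencil_size_le3 k_neq0 t1_neq0 e1 size_Q3.
- exact: pencil_size_le3 k_neq0 t2_neq0 e2 size_Q3.
- exact/esym/(pencil_size_le3 k_neq0 t3_neq0 e3 size_Q3).
Qed.

Theorem quartic_pencil_dichotomy :
  (exists N, [/\ Q = k%:P * N ^+ 2, simple_roots N & (2 <= size N)%N]) \/
  (simple_roots Q /\ (4 <= size Q)%N).
Proof.
have square p q r t : perm_eq [:: p; q; r] [:: a; b; c] ->
    Q = k%:P * W p q r ^+ 2 + t%:P * AB p q r -> t = 0 ->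
    exists N, [/\ Q = k%:P * N ^+ 2, simple_roots N & (2 <= size N)%N].
  move=> pqr -> ->; exists (W p q r); rewrite mul0r addr0.
  by split; [|apply: wronskian_pairing_simple | apply: size_wronskian_pairing].
have [t1 e1] := pairing_pencil (perm_refl [:: a; b; c]).
have [t2 e2] := pairing_pencil perm_acb.
have [t3 e3] := pairing_pencil perm_bca.
have [/(square _ _ _ _ (perm_refl _) e1)|t1_neq0] := eqVneq t1 0; first by left.
have [/(square _ _ _ _ perm_acb e2)|t2_neq0] := eqVneq t2 0; first by left.
have [/(square _ _ _ _ perm_bca e3)|t3_neq0] := eqVneq t3 0; first by left.
by right; split; [apply: pencils_simple_roots e1 e2 e3 | apply: pencils_size e1 e2 e3].
Qed.

End QuarticPencil.

Section Roots.
Variable C : closedFieldType.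

Lemma simple_roots_mup (Q : {poly C}) : Q != 0 -> simple_roots Q ->
  exists rs : seq C, [/\ uniq rs, size rs = (size Q).-1 & forall c, mup c Q = (c \in rs)].
Proof.
move=> Q0 simpleQ; have [rs eQ] := closed_field_poly_normal Q.
have mupQ c : mup c Q = count_mem c rs.
  by rewrite {1}eQ -mul_polyC mupMr ?mu_prod_XsubC // rootC lead_coef_eq0.
have count_le1 c : (count_mem c rs <= 1)%N.
  rewrite leqNgt -mupQ; apply/negP => /(mup_ge2_root Q0) [Qc Q'c].
  by move: Q'c; rewrite (negbTE (simpleQ c Qc)).
have count_rs c : count_mem c rs = (c \in rs).
  have := count_le1 c; rewrite -has_pred1 has_count; case: (count_mem c rs) => [|[]] //.
exists rs; split; first exact: count_mem_uniq.
  by rewrite {1}eQ size_scale ?lead_coef_eq0 // size_prod_XsubC.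
by move=> c; rewrite mupQ count_rs.
Qed.

End Roots.

Section Zeros.
Variable C : closedFieldType.
Variables (n d Q : {poly C}) (F : seq C).
Hypothesis Q_neq0 : Q != 0.
Hypothesis ord_off_poles : forall c, c \notin F -> qd_ord n d (Some c) = (mup c Q)%:Z.
Hypothesis at_poles : {in F, forall c, qd_ord n d (Some c) < 0 /\ ~~ root Q c}.

Lemma qd_zeros_of_order (rs : seq C) (m : nat) : uniq rs -> (0 < m)%N ->
  (forall c, mup c Q = m * (c \in rs))%N ->
  qd_ord n d None <= 0 \/ qd_ord n d None = m%:Z ->
  exists zs, [/\ uniq zs, (forall y, 0 < qd_ord n d y <-> y \in zs),
    {in zs, forall y, qd_ord n d y = m%:Z} &
    size zs = (size rs + (qd_ord n d None == m%:Z))%N].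
Proof.
move=> uniq_rs m_gt0 mupQ ordN.
have rs_off c : c \in rs -> c \notin F.
  move=> crs; apply/negP => /at_poles[_].
  by rewrite -dvdp_XsubCl XsubC_dvd // mupQ crs muln1 m_gt0.
exists (map Some rs ++ nseq (qd_ord n d None == m%:Z) None); split.
- rewrite cat_uniq (map_inj_uniq (@Some_inj _)) uniq_rs /=.
  by case: (_ == _); rewrite //= ?andbT ?orbF; apply/mapP => -[].
- case=> [c|]; rewrite mem_cat mem_nseq.
    rewrite (mem_map (@Some_inj _)) andbF orbF.
    have [cF|cF] := boolP (c \in F).
      have [ord_neg _] := at_poles cF.
      rewrite (negbTE (contraL (rs_off c) cF)); split => // ord_pos.
      by move: ord_pos; rewrite ltNge (ltW ord_neg).
    by rewrite ord_off_poles // mupQ; case: (c \in rs); rewrite ?muln1 ?muln0 ?ltz_nat.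
  have -> : (None \in map Some rs) = false by apply/mapP => -[].
  rewrite eqxx andbT; set o := qd_ord n d None in ordN *.
  case: ordN => [o_le0|->]; last by rewrite eqxx ltz_nat m_gt0.
  have -> : (o == m%:Z) = false.
    by apply: contraTF o_le0 => /eqP->; rewrite -ltNge ltz_nat.
  by rewrite ltNge o_le0.
- move=> y; rewrite mem_cat mem_nseq => /orP[/mapP[c crs ->]|/andP[+ /eqP->]].
    by rewrite ord_off_poles ?rs_off // mupQ crs muln1.
  by case: eqP.
- by rewrite size_cat size_map size_nseq.
Qed.

Hypothesis ord_infty : (qd_ord n d None = -2 /\ size Q = 5%N) \/
  (qd_ord n d None = 5%:Z - (size Q)%:Z /\ (size Q <= 5)%N).

Lemma qd_zeros_square (N : {poly C}) (k : C) : k != 0 ->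
  Q = k%:P * N ^+ 2 -> simple_roots N -> (2 <= size N)%N ->
  exists zs, [/\ uniq zs, (forall y, 0 < qd_ord n d y <-> y \in zs),
    {in zs, forall y, qd_ord n d y = 2} & size zs = 2%N].
Proof.
move=> k_neq0 def_Q simple_N size_N.
have N0 : N != 0 by rewrite -size_poly_gt0 ltnW.
have [rs [uniq_rs size_rs mup_N]] := simple_roots_mup N0 simple_N.
have mup_Q z : mup z Q = (2 * (z \in rs))%N.
  by rewrite def_Q mupMr ?rootC // expr2 mupM // mup_N mul2n addnn.
have size_QN : size Q = (size N + size N).-1.
  by rewrite def_Q size_Cmul // expr2 size_mul.
have [[sN ordN] | [sN ordN]] : (size N = 2 /\ qd_ord n d None = 2) \/
                               (size N = 3 /\ qd_ord n d None <= 0).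
  by case: ord_infty; rewrite size_QN -subn1 => -[-> sQ]; lia.
  have [zs [uniq_zs zeros_zs ord_zs size_zs]] :=
    qd_zeros_of_order uniq_rs (isT : (0 < 2)%N) mup_Q (or_intror ordN).
  by exists zs; rewrite size_zs size_rs sN ordN eqxx.
have [zs [uniq_zs zeros_zs ord_zs size_zs]] :=
  qd_zeros_of_order uniq_rs (isT : (0 < 2)%N) mup_Q (or_introl ordN).
exists zs; rewrite size_zs size_rs sN; split => //.
by case: eqP ordN => // ->.
Qed.

Lemma qd_zeros_simple : simple_roots Q -> (4 <= size Q)%N ->
  exists zs, [/\ uniq zs, (forall y, 0 < qd_ord n d y <-> y \in zs),
    {in zs, forall y, qd_ord n d y = 1} & size zs = 4%N].
Proof.
move=> simple_Q size_Q.
have [rs [uniq_rs size_rs mup_Q]] := simple_roots_mup Q_neq0 simple_Q.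
have mup1_Q z : mup z Q = (1 * (z \in rs))%N by rewrite mul1n mup_Q.
have [[sQ ordN] | [sQ ordN]] : (size Q = 4 /\ qd_ord n d None = 1) \/
                               (size Q = 5 /\ qd_ord n d None <= 0).
  by case: ord_infty => -[-> sQ]; lia.
  have [zs [uniq_zs zeros_zs ord_zs size_zs]] :=
    qd_zeros_of_order uniq_rs (isT : (0 < 1)%N) mup1_Q (or_intror ordN).
  by exists zs; rewrite size_zs size_rs sQ ordN eqxx.
have [zs [uniq_zs zeros_zs ord_zs size_zs]] :=
  qd_zeros_of_order uniq_rs (isT : (0 < 1)%N) mup1_Q (or_introl ordN).
exists zs; rewrite size_zs size_rs sQ; split => //.
by case: eqP ordN => // ->.
Qed.

End Zeros.

Section Multiplicities.
Variable C : fieldType.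

Lemma prod_XsubC_dvdp_mup (rs : seq C) (q : {poly C}) : q != 0 ->
  (forall c, count_mem c rs <= mup c q)%N -> \prod_(z <- rs) ('X - z%:P) %| q.
Proof.
elim: rs q => [|z rs IH] q q0 count_le; first by rewrite big_nil dvd1p.
have /dvdpP [q' def_q] : 'X - z%:P %| q.
  by rewrite XsubC_dvd // (leq_trans _ (count_le z)) //= eqxx.
have q'0 : q' != 0 by apply: contraNneq q0; rewrite def_q => ->; rewrite mul0r.
rewrite big_cons def_q [q' * _]mulrC dvdp_mul2l ?polyXsubC_eq0 //.
apply: IH => // c; have := count_le c.
rewrite def_q mupM ?polyXsubC_eq0 // -['X - z%:P]expr1 mup_XsubCX /=.
by case: (z == c) => /=; move: (count_mem c rs) (mup c q'); lia.
Qed.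

Lemma cleared_double_pole (n d Q P : {poly C}) (c k : C) : n != 0 -> d != 0 ->
  Q * d = n * P ^+ 2 -> root P c ->
  qd_ord n d (Some c) = -2 -> qd_lcoef n d (Some c) = k ->
  Q.[c] = k * (P^`()).[c] ^+ 2.
Proof.
move=> n0 d0 eQ Pc ord_c.
have [a [n1 /implyP/(_ n0) n1c def_n]] := multiplicity_XsubC n c.
have [b [d1 /implyP/(_ d0) d1c def_d]] := multiplicity_XsubC d c.
have mup_n : mup c n = a by rewrite def_n mupMr // mup_XsubCX eqxx.
have mup_d : mup c d = b by rewrite def_d mupMr // mup_XsubCX eqxx.
have b_eq : b = (a + 2)%N by move: ord_c; rewrite /qd_ord mup_n mup_d; lia.
rewrite /qd_lcoef mup_n mup_d def_n def_d !mulpK ?expf_neq0 ?polyXsubC_eq0 // => <-.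
have /factor_theorem[P1 def_P] := Pc.
have : n1 * P1 ^+ 2 = Q * d1.
  apply: (@mulIf _ (('X - c%:P) ^+ b)); first by rewrite expf_neq0 ?polyXsubC_eq0.
  by rewrite -[Q * d1 * _]mulrA -def_d eQ def_n def_P b_eq exprD; ring.
move/(congr1 (horner^~ c)); rewrite !horner_evalE => value_c.
rewrite def_P derivM derivXsubC !horner_evalE subrr mulr0 add0r mulr1.
by apply: (mulIf d1c); rewrite -value_c mulrAC mulfVK.
Qed.

End Multiplicities.

Section ClearPoles.
Variable C : closedFieldType.

Lemma dvdp_mup (p q : {poly C}) : p != 0 -> q != 0 ->
  (forall c, mup c p <= mup c q)%N -> p %| q.
Proof.
move=> p0 q0 mup_pq; have [rs def_p] := closed_field_poly_normal p.
rewrite def_p dvdpZl ?lead_coef_eq0 //; apply: prod_XsubC_dvdp_mup => // c.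
rewrite -mu_prod_XsubC (leq_trans _ (mup_pq c)) // [in X in (_ <= X)%N]def_p.
by rewrite -mul_polyC mupMr // rootC lead_coef_eq0.
Qed.

(* [Q] is the polynomial with q = (Q / P^2) dz^2, where P is the product of the
   X - c over the finite poles c. *)
Lemma clear_double_poles (n d : {poly C}) (F : seq C) (k : C) :
  n != 0 -> d != 0 -> uniq F ->
  (forall c, qd_ord n d (Some c) < 0 <-> c \in F) ->
  {in F, forall c, qd_ord n d (Some c) = -2 /\ qd_lcoef n d (Some c) = k} ->
  exists Q : {poly C}, [/\ Q != 0,
    forall c, c \notin F -> qd_ord n d (Some c) = (mup c Q)%:Z,
    {in F, forall c,
       ~~ root Q c /\ Q.[c] = k * ((\prod_(z <- F) ('X - z%:P))^`()).[c] ^+ 2},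
    qd_ord n d None = (2 * size F)%:Z - 3 - (size Q)%:Z &
    qd_lcoef n d None = lead_coef Q].
Proof.
move=> n0 d0 uniq_F ord_neg ord_poles; set P := \prod_(z <- F) _.
have P_monic : P \is monic by apply: monic_prod_XsubC.
have P0 : P != 0 by apply: monic_neq0.
have nP0 : n * P ^+ 2 != 0 by rewrite mulf_neq0 ?expf_neq0.
have mup_nP c : mup c (n * P ^+ 2) = (mup c n + 2 * (c \in F))%N.
  rewrite mupM ?expf_neq0 // expr2 mupM // mu_prod_XsubC count_uniq_mem //.
  by rewrite mul2n addnn.
have /divpK eQ : d %| n * P ^+ 2.
  apply: dvdp_mup => // c; rewrite mup_nP.
  have [cF|cF] := boolP (c \in F).
    by have [] := ord_poles c cF; rewrite /qd_ord; lia.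
  have : ~ (qd_ord n d (Some c) < 0) by rewrite ord_neg (negbTE cF).
  by rewrite /qd_ord; lia.
set Q := n * P ^+ 2 %/ d in eQ *.
have Q0 : Q != 0 by apply: contraNneq nP0 => Q0; rewrite -eQ Q0 mul0r.
have mupQ c : (mup c Q + mup c d = mup c n + 2 * (c \in F))%N.
  by rewrite -mupM // eQ mup_nP.
exists Q; split => //.
- by move=> c cF; have := mupQ c; rewrite (negbTE cF) /qd_ord; lia.
- move=> c cF; have [ord_c lcoef_c] := ord_poles c cF.
  have mupQ0 : mup c Q = 0%N by move: ord_c (mupQ c); rewrite cF /qd_ord; lia.
  split; first by rewrite -dvdp_XsubCl XsubC_dvd // mupQ0.
  by apply: (cleared_double_pole n0 d0 eQ _ ord_c lcoef_c); rewrite root_prod_XsubC.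
- have := congr1 (fun p : {poly C} => size p) eQ.
  rewrite /= expr2 !size_mul ?mulf_neq0 // /P size_prod_XsubC /qd_ord -!subn1.
  have := size_poly_gt0 Q; have := size_poly_gt0 d; have := size_poly_gt0 n.
  rewrite Q0 d0 n0; move: (size Q) (size d) (size n) => sQ sd sn; lia.
- rewrite /qd_lcoef; have := congr1 lead_coef eQ.
  rewrite !lead_coefM (monicP P_monic) !mulr1 => <-.
  by rewrite mulfK // lead_coef_eq0.
Qed.

End ClearPoles.

Lemma finite_points_of_four (T : eqType) (poles : seq (option T)) :
  uniq poles -> size poles = 4%N ->
  exists a b c (x : option T),
    pmap id poles = [:: a, b, c & seq_of_opt x] /\ (x = None <-> None \in poles).
Proof.
move=> uniq_poles size_poles.
have : (size (pmap id poles) + (None \in poles) = 4)%N.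
  rewrite size_pmap -size_poles -(count_predC (@isSome T)) -count_uniq_mem //.
  by congr (_ + _)%N; apply: eq_count => -[].
case: (None \in poles); case: (pmap id poles) => [|a [|b [|c [|e []]]]] //= _.
  by exists a, b, c, None.
by exists a, b, c, (Some e).
Qed.

Theorem four_double_poles_zeros (C : closedFieldType) (n d : {poly C}) (k : C) :
  2%:R != 0 :> C -> k != 0 -> n != 0 -> d != 0 ->
  (exists poles : seq (option C),
      [/\ uniq poles, size poles = 4%N,
          (forall x, qd_ord n d x < 0 <-> x \in poles) &
          (forall x, x \in poles -> qd_ord n d x = -2 /\ qd_lcoef n d x = k)]) ->
  exists zeros : seq (option C),
    [/\ uniq zeros,
        (forall x, 0 < qd_ord n d x <-> x \in zeros) &
        (size zeros = 2%N /\ (forall x, x \in zeros -> qd_ord n d x = 2))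
        \/
        (size zeros = 4%N /\ (forall x, x \in zeros -> qd_ord n d x = 1))].
Proof.
move=> two_neq0 k_neq0 n0 d0 [poles [uniq_poles size_poles ord_neg ord_poles]].
have [a [b [c [x [def_F x_none]]]]] := finite_points_of_four uniq_poles size_poles.
have memF z : (z \in [:: a, b, c & seq_of_opt x]) = (Some z \in poles).
  by rewrite -def_F mem_pmap map_id.
have uniq_F : uniq [:: a, b, c & seq_of_opt x].
  by rewrite -def_F; apply: (pmap_uniq (g := Some)) => // -[].
have [|z zF|Q [Q0 ord_off at_poles ordN lcoefN]] :=
  clear_double_poles (k := k) n0 d0 uniq_F.
- by move=> z; rewrite memF.
- by apply: ord_poles; rewrite -memF.
have ord_infty : (qd_ord n d None = -2 /\ size Q = 5%N) \/
    (qd_ord n d None = 5%:Z - (size Q)%:Z /\ (size Q <= 5)%N).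
  have [Nin|Nout] := boolP (None \in poles).
    have [ord2 _] := ord_poles None Nin; left; split => //.
    by move: ord2; rewrite ordN (x_none.2 Nin) /=; lia.
  have ord_nonneg : ~ (qd_ord n d None < 0) by rewrite ord_neg; apply/negP.
  have x_some : x != None by apply: contraNneq Nout => /x_none.
  case E: x x_some ordN => [e|] // _ ordN; right.
  by move: ord_nonneg; rewrite ordN /=; move: (size Q) => m; lia.
have coef4_Q : x = None -> Q`_4 = k.
  move=> /x_none Nin; have [ord2 <-] := ord_poles None Nin.
  have size_Q : size Q = 5%N.
    by case: ord_infty => -[ord_Q size_Q] //; move: ord2 size_Q; rewrite ord_Q; lia.
  by rewrite lcoefN lead_coefE size_Q.
have poles_neg : {in [:: a, b, c & seq_of_opt x], forall z,
    qd_ord n d (Some z) < 0 /\ ~~ root Q z}.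
  by move=> z zF; split; [apply/ord_neg; rewrite -memF | case: (at_poles z zF)].
have size_Q5 : (size Q <= 5)%N by case: ord_infty => -[_ ->].
case: (quartic_pencil_dichotomy two_neq0 uniq_F k_neq0 size_Q5 coef4_Q
  (fun z zF => (at_poles z zF).2) (fun z zF => (at_poles z zF).1)).
  case=> N [def_Q simple_N size_N].
  have [zs [? ? ? ?]] :=
    qd_zeros_square Q0 ord_off poles_neg ord_infty k_neq0 def_Q simple_N size_N.
  by exists zs; split => //; left.
case=> simple_Q size_Q.
have [zs [? ? ? ?]] := qd_zeros_simple Q0 ord_off poles_neg ord_infty simple_Q size_Q.
by exists zs; split => //; right.
Qed.

Theorem lemma3p1 (R : realType) (n d : {poly R[i]}) :
  n != 0 -> d != 0 ->
  (exists poles : seq (option R[i]),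
      [/\ uniq poles, size poles = 4%N,
          (forall x, qd_ord n d x < 0 <-> x \in poles) &
          (forall x, x \in poles ->
             qd_double_pole_res (Complex pi 0) n d x 1)]) ->
  exists zeros : seq (option R[i]),
    [/\ uniq zeros,
        (forall x, 0 < qd_ord n d x <-> x \in zeros) &
        (size zeros = 2%N /\ (forall x, x \in zeros -> qd_ord n d x = 2))
        \/
        (size zeros = 4%N /\ (forall x, x \in zeros -> qd_ord n d x = 1))].
Proof.
move=> n0 d0 poles; apply: four_double_poles_zeros n0 d0 poles.
- by rewrite pnatr_eq0.
have pi_neq0 : Complex (pi : R) 0 != 0.
  by rewrite eq_complex /= negb_and (gt_eqF (pi_gt0 R)).
by rewrite mulf_neq0 ?oppr_eq0 ?expr1n ?oner_eq0 // invr_eq0 mulf_neq0 ?expf_neq0 ?pnatr_eq0.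
Qed.
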